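(* Let $k\ge 2$ and let $p\ge 2$ be an integer dividing $k$. If a finite simple graph $G$ admits a closed neighborhood balanced $k$-coloring, then $G$ also admits a closed neighborhood balanced $p$-coloring.
   Context: $N[v]=\{v\}\cup\{u : uv\in E(G)\}$. For an integer $m\ge 2$, a closed neighborhood balanced $m$-coloring of $G$ is a map $c: V(G)\to\{1,\dots,m\}$ such that for every vertex $v$ the numbers $|\{u\in N[v] : c(u)=i\}|$, $i=1,\dots,m$, are all equal. *)

From mathcomp Require Import all_boot.
Set Implicit Arguments. Unset Strict Implicit. Unset Printing Implicit Defensive.

Definition simple_graph (T : finType) (e : rel T) : Prop :=
  symmetric e /\ irreflexive e.

Definition closed_nbhd (T : finType) (e : rel T) (v : T) : {set T} :=
  [set u | (u == v) || e v u].

(* A closed neighborhood balanced m-coloring, colors {1..m} encoded as 'I_m: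
   for every v, the color classes within N[v] all have the same size. *)
Definition cnb_coloring (T : finType) (e : rel T) (m : nat) (c : T -> 'I_m) : Prop :=
  forall (v : T) (i j : 'I_m),
    #|[set u in closed_nbhd e v | c u == i]| = #|[set u in closed_nbhd e v | c u == j]|.

Definition has_cnb_coloring (T : finType) (e : rel T) (m : nat) : Prop :=
  exists c : T -> 'I_m, cnb_coloring e c.

(* Reducing the colors of a closed neighborhood balanced k-coloring modulo p
   merges the k color classes into p groups of k/p classes each.  Since every
   closed neighborhood meets all k classes equally often, it also meets the p
   merged classes equally often. *)

From mathcomp Require Import all_boot.

Set Implicit Arguments.
Unset Strict Implicit.
Unset Printing Implicit Defensive.

Lemma card_comp_class (T I J : finType) (A : {set T}) (c : T -> I) (f : I -> J)
    (j : J) :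
  #|[set u in A | f (c u) == j]| = \sum_(i | f i == j) #|[set u in A | c u == i]|.
Proof.
rewrite -sum1_card (partition_big c (fun i => f i == j)) => [|u]; last first.
  by rewrite inE => /andP[].
apply: eq_bigr => i /eqP fij; rewrite -sum1_card; apply: eq_bigl => u.
by rewrite !inE; case: (c u =P i) => [->|]; rewrite ?fij ?eqxx ?andbT ?andbF.
Qed.

Lemma cnb_coloring_comp (T : finType) (e : rel T) (m n : nat) (c : T -> 'I_m)
    (f : 'I_m -> 'I_n) :
  (forall j j', #|[set i | f i == j]| = #|[set i | f i == j']|) ->
  cnb_coloring e c -> cnb_coloring e (f \o c).
Proof.
move=> f_fibers c_cnb v j j'.
have class_sum (l : 'I_n) : #|[set u in closed_nbhd e v | f (c u) == l]| =
    #|[set i | f i == l]| * #|[set u in closed_nbhd e v | c u == c v]|.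
  rewrite card_comp_class -sum_nat_const.
  by apply: eq_big => [i | i _]; rewrite ?inE ?c_cnb.
by rewrite /= !class_sum (f_fibers j j').
Qed.

Lemma sum_mod_eq (m p j : nat) : j < p -> \sum_(i < m * p | i %% p == j) 1 = m.
Proof.
move=> lt_jp; elim: m => [|m IHm]; first by rewrite mul0n big_ord0.
rewrite mulSn addnC big_split_ord /= IHm -[RHS]addn1; congr (_ + _).
rewrite (eq_bigl (pred1 (Ordinal lt_jp))) ?big_pred1_eq // => i.
by rewrite /= modnMDl modn_small.
Qed.

Definition ord_mod (k p : nat) (p_gt0 : 0 < p) (i : 'I_k) : 'I_p :=
  Ordinal (ltn_pmod i p_gt0).

Lemma card_ord_mod_fiber (k p : nat) (p_gt0 : 0 < p) (j : 'I_p) :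
  p %| k -> #|[set i : 'I_k | ord_mod p_gt0 i == j]| = k %/ p.
Proof.
move=> /dvdnP[m ->]; rewrite mulnK // cardsE -sum1_card.
by rewrite -[RHS](sum_mod_eq m (ltn_ord j)); apply: eq_bigl.
Qed.

Theorem lemma2p4 (T : finType) (e : rel T) (k p : nat) :
  simple_graph e -> 2 <= k -> 2 <= p -> p %| k ->
  has_cnb_coloring e k -> has_cnb_coloring e p.
Proof.
move=> _ _ p_ge2 p_dvd_k [c c_cnb].
have p_gt0 : 0 < p by apply: leq_trans p_ge2.
exists (ord_mod p_gt0 \o c); apply: cnb_coloring_comp c_cnb => j j'.
by rewrite !card_ord_mod_fiber.
Qed.
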